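(* Sorted and semi-sorted $n$-tape asynchronous automata over a finite alphabet $A$ accept the same class of languages: a language $L\subseteq(A^\ast)^n$ is accepted by some $n$-tape sorted asynchronous automaton if and only if it is accepted by some $n$-tape semi-sorted asynchronous automaton.
   Context: $A^\ast$ is the set of finite words over $A$, $[n]=\{1,\ldots,n\}$, $\$$ is a new symbol, $w\$$ is $w$ followed by $\$$. A shuffle of $(w_1,\ldots,w_n)$ is an ordering of all letters of the $w_i$ respecting the order within each $w_i$. A partial deterministic finite state automaton has a unique start state, no $\epsilon$-transitions and at most one outgoing transition per state and letter. An $n$-tape semi-sorted asynchronous automaton over $A$ is a partial deterministic finite state automaton over $A\sqcup\{\$\}$ with a partition of its state set into $n$ sets $S_1,\ldots,S_n$; it accepts $(w_1,\ldots,w_n)$ iff some shuffle of $(w_1\$,\ldots,w_n\$)$ is read along a path from the start state to an accept state in which each letter coming from $w_i\$$ is read while in a state of $S_i$. An $n$-tape sorted asynchronous automaton over $A$ is a partial deterministic finite state automaton over $A\sqcup\{\$\}$ with a partition of its state set into subsets $S_i^V$, for $V$ a proper subset of $[n]$ and $i\in[n]\setminus V$, and a final subset $S_f^{[n]}$, such that: the start state lies in $S_i^{\emptyset}$ for some $i$; an arrow is labelled $\$$ iff it goes from a state in some $S_i^V$ to a state in $S_j^U$ with $j\neq i$ and $U=V\cup\{i\}$ (or, when $V\cup\{i\}=[n]$, to $S_f^{[n]}$); arrows not labelled $\$$ starting in $S_i^V$ end in $S_j^V$ for some $j\notin V$; $S_f^{[n]}$ consists of exactly one state, which is the unique accept state;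 no arrows start in $S_f^{[n]}$. It accepts $(w_1,\ldots,w_n)$ iff some shuffle of $(w_1\$,\ldots,w_n\$)$ is read along a path from the start state to the accept state in which each letter coming from $w_i\$$ is read while in a state of some $S_i^V$. *)

From mathcomp Require Import all_boot.
Set Implicit Arguments. Unset Strict Implicit. Unset Printing Implicit Defensive.

(* Letters of A ⊔ {$} are encoded as option A: Some a = a, None = $. *)

(* A configuration is a state together
   with the remaining (unread) suffixes of the words w_i$. *)
Inductive accepts_from (A : finType) (n : nat) (Q : finType)
    (delta : Q -> option A -> option Q) (tp : Q -> option 'I_n) (F : pred Q)
  : Q -> ('I_n -> seq (option A)) -> Prop :=
| acc_done q u : F q -> (forall i, u i = [::]) -> accepts_from delta tp F q u
| acc_step q u i c s q' :
    tp q = Some i -> u i = c :: s -> delta q c = Some q' ->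
    accepts_from delta tp F q' (fun j => if j == i then s else u j) ->
    accepts_from delta tp F q u.

Definition init_tapes (A : finType) (n : nat) (w : 'I_n -> seq A)
  : 'I_n -> seq (option A) := fun i => map Some (w i) ++ [:: None].

Record semisorted_aut (A : finType) (n : nat) := SemiSorted {
  ss_state : finType;
  ss_start : ss_state;
  ss_delta : ss_state -> option A -> option ss_state;
  ss_part : ss_state -> 'I_n;          (* q \in S_(ss_part q) *)
  ss_accept : {set ss_state} }.

Definition ss_accepts (A : finType) (n : nat) (M : semisorted_aut A n)
    (w : 'I_n -> seq A) : Prop :=
  accepts_from (@ss_delta A n M) (fun q => Some (ss_part q))
    (fun q => q \in ss_accept M) (ss_start M) (init_tapes w).

(* Sorted automata: the label of a state q is Some (V, i) if q \in S_i^V,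
   and None if q \in S_f^[n]. *)
Definition sorted_wf (A : finType) (n : nat) (Q : finType) (q0 : Q)
    (delta : Q -> option A -> option Q)
    (lab : Q -> option ({set 'I_n} * 'I_n)) : Prop :=
  [/\ (forall q V i, lab q = Some (V, i) -> i \notin V),
      (exists i, lab q0 = Some (set0, i)),
      (forall q V i c q', lab q = Some (V, i) -> delta q c = Some q' ->
         match c with
         | None => if V :|: [set i] == setT then lab q' = None
                   else exists j, j != i /\ lab q' = Some (V :|: [set i], j)
         | Some _ => exists j, lab q' = Some (V, j)
         end),
      (exists qf, forall q, lab q = None <-> q = qf) &
      (forall q c, lab q = None -> delta q c = None)].

Record sorted_aut (A : finType) (n : nat) := Sorted {
  so_state : finType;
  so_start : so_state;
  so_delta : so_state -> option A -> option so_state;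
  so_label : so_state -> option ({set 'I_n} * 'I_n);
  so_wf : sorted_wf so_start so_delta so_label }.

(* the unique accept state is the unique state of S_f^[n] *)
Definition so_accepts (A : finType) (n : nat) (M : sorted_aut A n)
    (w : 'I_n -> seq A) : Prop :=
  accepts_from (@so_delta A n M) (fun q => omap snd (so_label q))
    (fun q => so_label q == None) (so_start M) (init_tapes w).

From mathcomp Require Import all_boot.
Set Implicit Arguments. Unset Strict Implicit. Unset Printing Implicit Defensive.

(* A sorted automaton is a semi-sorted one once its labels are forgotten: its
   unique accept state has no outgoing arrows, so its tape is irrelevant.
   Conversely, a semi-sorted automaton is sorted by recording in its state the
   set V of tapes whose end marker has been read; a run always keeps V equal
   to the set of exhausted tapes.  Reading the end marker of the last tape
   leads to the final state exactly when the semi-sorted automaton accepts,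
   and a semi-sorted run that enters a state whose tape is exhausted must stop
   there, so every state it visits lies outside the recorded V. *)

Section Runs.
Variables (A : finType) (n : nat) (Q : finType).
Variable delta : Q -> option A -> option Q.

Lemma accepts_from_mono (tp1 tp2 : Q -> option 'I_n) (F1 F2 : pred Q) q u :
  (forall q i c q', tp1 q = Some i -> delta q c = Some q' -> tp2 q = Some i) ->
  (forall q, F1 q -> F2 q) ->
  accepts_from delta tp1 F1 q u -> accepts_from delta tp2 F2 q u.
Proof.
move=> Htp HF; elim=> {q u} [q u Fq Hu | q u i c s q' Hi Hu Hd _ IH].
  by apply: acc_done; auto.
exact: (acc_step (Htp _ _ _ _ Hi Hd) Hu Hd IH).
Qed.

Variables (tp : Q -> option 'I_n) (F : pred Q).

Lemma accepts_from_nil q u :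
  accepts_from delta tp F q u -> (forall j, u j = [::]) -> F q.
Proof. by case=> // {}q {}u i c s q' _ Hu _ _ /(_ i); rewrite Hu. Qed.

Lemma accepts_from_stuck q u i :
  accepts_from delta tp F q u -> tp q = Some i -> u i = [::] ->
  forall j, u j = [::].
Proof. by case=> // {}q {}u j c s q' -> Hu _ _ [<-]; rewrite Hu. Qed.

End Runs.

Section Tapes.
Variables (A : finType) (n : nat).
Implicit Types (u : 'I_n -> seq (option A)) (w : 'I_n -> seq A).

Definition upd_tape u (i : 'I_n) (s : seq (option A)) : 'I_n -> seq (option A) :=
  fun j => if j == i then s else u j.

Definition finished u : {set 'I_n} := [set i | u i == [::]].

Definition dollar_terminated u :=
  forall i, u i = [::] \/ exists x, u i = map Some x ++ [:: None].

Lemma init_tapes_dollar_terminated w : dollar_terminated (init_tapes w).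
Proof. by move=> i; right; exists (w i). Qed.

Lemma finished_init_tapes w : finished (init_tapes w) = set0.
Proof. by apply/setP => i; rewrite !inE /init_tapes; case: (w i). Qed.

Lemma finishedT u : reflect (forall j, u j = [::]) (finished u == setT).
Proof.
apply: (iffP eqP) => [/setP Hu j | Hu]; last by apply/setP => j; rewrite !inE Hu.
by apply/eqP; have := Hu j; rewrite !inE.
Qed.

Lemma dollar_terminated_step u i c s :
  dollar_terminated u -> u i = c :: s -> dollar_terminated (upd_tape u i s).
Proof.
move=> Hdt Hu j; rewrite /upd_tape; case: eqP => _; last exact: Hdt.
case: (Hdt i) => [|[[|a x]]]; rewrite Hu // => -[_ ->]; first by left.
by right; exists x.
Qed.

Lemma finished_step u i c s :
  dollar_terminated u -> u i = c :: s ->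
  finished (upd_tape u i s) = if c is None then finished u :|: [set i]
                              else finished u.
Proof.
move=> Hdt Hu; case: (Hdt i) => [|[[|a x]]]; rewrite Hu // => -[-> ->].
  apply/setP => j; rewrite !inE /upd_tape.
  by case: (j =P i) => [->|_]; rewrite ?eqxx ?orbT ?orbF.
apply/setP => j; rewrite !inE /upd_tape.
by case: (j =P i) => [->|//]; rewrite Hu; case: x.
Qed.

End Tapes.

Section Sortify.
Variables (A : finType) (n : nat) (M : semisorted_aut A n).
Local Notation Q := (ss_state M).
Local Notation part := (@ss_part A n M).
Local Notation delta := (@ss_delta A n M).

(* States whose tape lies in the recorded set are dead; their label is only
   there to satisfy well-formedness. *)
Definition sortify_label (x : option (Q * {set 'I_n}))
  : option ({set 'I_n} * 'I_n) :=
  if x is Some (q, V) then Some (if part q \in V then set0 else V, part q)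
  else None.

Definition sortify_next (V : {set 'I_n}) (q' : Q)
  : option (option (Q * {set 'I_n})) :=
  if V == setT then (if q' \in ss_accept M then Some None else None)
  else if part q' \in V then None else Some (Some (q', V)).

Definition sortify_delta (x : option (Q * {set 'I_n})) (c : option A)
  : option (option (Q * {set 'I_n})) :=
  if x is Some (q, V) then
    if part q \in V then None
    else if delta q c is Some q' then
      sortify_next (if c is None then V :|: [set part q] else V) q'
    else None
  else None.

Lemma sortify_wf :
  sorted_wf (Some (ss_start M, set0)) sortify_delta sortify_label.
Proof.
split.
- by move=> [[q W]|] V i //= [<- <-]; case: ifP => [_|->]; rewrite ?inE.
- by exists (part (ss_start M)); rewrite /= if_same.
- move=> [[q W]|] V i c x' //= [<- <-]; case: ifP => // Hq.
  case: (delta q c) => [q'|] //; rewrite /sortify_next; case: c => [a|].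
    have /negbTE -> : W != setT by apply: contraFN Hq => /eqP ->; rewrite inE.
    by case: ifP => // Hq' [<-] /=; rewrite Hq'; exists (part q').
  case: ifP => _; first by case: ifP => // _ [<-].
  case: ifP => // Hq' [<-] /=; rewrite Hq'; exists (part q'); split => //.
  by apply: contraFN Hq' => /eqP ->; rewrite !inE eqxx orbT.
- by exists None => -[[q V]|].
- by move=> [[q V]|].
Qed.

Definition sortify : sorted_aut A n := Sorted sortify_wf.

Local Notation ss_run :=
  (accepts_from delta (fun q => Some (part q)) (fun q => q \in ss_accept M)).
Local Notation so_run :=
  (accepts_from sortify_delta (fun x => omap snd (sortify_label x))
     (fun x => sortify_label x == None)).

Lemma sortify_run q u :
  ss_run q u -> dollar_terminated u -> part q \notin finished u ->
  so_run (Some (q, finished u)) u.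
Proof.
elim=> {q u} [q u _ Hu | q u i c s q' [<-] Hu Hd Hrun IH] Hdt Hq.
  by rewrite inE Hu eqxx in Hq.
rewrite -/(upd_tape u (part q) s) in Hrun IH *.
have Hdelta : sortify_delta (Some (q, finished u)) c
              = sortify_next (finished (upd_tape u (part q) s)) q'.
  by rewrite /= (negbTE Hq) Hd (finished_step Hdt Hu).
move: Hdelta; rewrite /sortify_next; case: finishedT => [Hall | HnT].
  rewrite (accepts_from_nil Hrun Hall) => Hdelta.
  by apply: (acc_step erefl Hu Hdelta); apply: acc_done.
have Hq' : part q' \notin finished (upd_tape u (part q) s).
  by apply/negP; rewrite inE => /eqP /(accepts_from_stuck Hrun erefl).
rewrite (negbTE Hq') => Hdelta; apply: (acc_step erefl Hu Hdelta).
exact: IH (dollar_terminated_step Hdt Hu) Hq'.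
Qed.

Lemma sortify_run_inv x u :
  so_run x u -> if x is Some (q, _) then ss_run q u else forall j, u j = [::].
Proof.
elim=> {x u} [[[q V]|] u // | [[q V]|] u i c s x' //= [<-] Hu Hd _ IH].
move: Hd; case: ifP => // _; case Hd: (delta q c) => [q'|] // Hnext.
apply: (acc_step erefl Hu Hd); move: Hnext IH; rewrite /sortify_next.
case: ifP => _; first by case: ifP => // Hacc [<-] Hall; apply: acc_done.
by case: ifP => // _ [<-].
Qed.

Lemma ss_accepts_sortify w : ss_accepts M w <-> so_accepts sortify w.
Proof.
split=> [Hrun | /sortify_run_inv //].
have := sortify_run Hrun (init_tapes_dollar_terminated w).
by rewrite finished_init_tapes; apply; rewrite inE.
Qed.

End Sortify.

Section Forget.
Variables (A : finType) (n : nat) (M : sorted_aut A n) (i0 : 'I_n).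

(* [i0] is only the tape of the final state, from which nothing is read. *)
Definition forget : semisorted_aut A n :=
  SemiSorted (so_start M) (@so_delta A n M) (fun q => oapp snd i0 (so_label q))
    [set q | so_label q == None].

Lemma so_accepts_forget w : so_accepts M w <-> ss_accepts forget w.
Proof.
have [_ _ _ _ Hfinal] := so_wf M.
split; apply: accepts_from_mono => [q i c q' | q] /=; rewrite ?inE //.
  by case: (so_label q) => [[V j]|] //= [<-].
by case E: (so_label q) => [[V j]|] /= [<-]; rewrite // Hfinal.
Qed.

End Forget.

Theorem mainTheorem6 (A : finType) (n : nat) (L : ('I_n -> seq A) -> Prop) :
  (exists M : sorted_aut A n, forall w, L w <-> so_accepts M w) <->
  (exists M : semisorted_aut A n, forall w, L w <-> ss_accepts M w).
Proof.
split=> [[M HM] | [M HM]].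
  have [_ [i0 _] _ _ _] := so_wf M.
  by exists (forget M i0) => w; exact: iff_trans (HM w) (so_accepts_forget M i0 w).
by exists (sortify M) => w; exact: iff_trans (HM w) (ss_accepts_sortify M w).
Qed.
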